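(* Let $n \geq 2$ be an integer and let $$\mathbf{S} = \Big\{(x_1,\ldots,x_n) \in \mathbb{R}^n \;:\; \sum_{i=1}^n x_i = 1,\; x_i \geq 0 \text{ for } i=1,\ldots,n\Big\}.$$ Let $f$ be a real-valued function that is convex and continuous on $\mathbf{S}$ and differentiable on $\mathbf{S}$ (i.e. $f$ is the restriction to $\mathbf{S}$ of a function differentiable on an open neighborhood of $\mathbf{S}$ in $\mathbb{R}^n$). Fix constants $s>0$ and $\rho>1$ and put $\delta_k = s/\rho^k$ for $k \in \mathbb{N}$. Let $\mathbf{u}=(u_1,\ldots,u_n) \in \mathbf{S}$ with $u_j>0$ for all $j$. For $i=1,\ldots,n$ and $k\in\mathbb{N}$ define $\mathbf{u}_k^{(i+)}, \mathbf{u}_k^{(i-)} \in \mathbb{R}^n$ by $$\big(\mathbf{u}_k^{(i+)}\big)_i = u_i + \delta_k,\qquad \big(\mathbf{u}_k^{(i+)}\big)_j = u_j - \frac{\delta_k}{n-1}\ (j\neq i),$$ $$\big(\mathbf{u}_k^{(i-)}\big)_i = u_i - \delta_k,\qquad \big(\mathbf{u}_k^{(i-)}\big)_j = u_j + \frac{\delta_k}{n-1}\ (j\neq i).$$ Suppose that for every $k\in\mathbb{N}$ and every $i\in\{1,\ldots,n\}$ we have $f(\mathbf{u}) \leq f(\mathbf{u}_k^{(i+)})$ whenever $\mathbf{u}_k^{(i+)} \in \mathbf{S}$, and $f(\mathbf{u}) \leq f(\mathbf{u}_k^{(i-)})$ whenever $\mathbf{u}_k^{(i-)} \in \mathbf{S}$.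 Then $\mathbf{u}$ is a global minimizer of $f$ on $\mathbf{S}$, i.e. $f(\mathbf{u}) \leq f(\mathbf{x})$ for all $\mathbf{x}\in\mathbf{S}$.
   Context: $\mathbb{N}$ denotes the positive integers. The points $\mathbf{u}_k^{(i\pm)}$ are obtained from $\mathbf{u}$ by moving the $i$-th coordinate by $\pm\delta_k$ and compensating equally in the other $n-1$ coordinates so that the coordinate sum stays equal to $1$; they lie in $\mathbf{S}$ exactly when all their coordinates are nonnegative. *)

From mathcomp Require Import ssreflect ssrbool eqtype ssrnat fintype bigop.
From Stdlib Require Import Reals.
Open Scope R_scope.

Definition vec (n : nat) := 'I_n -> R.

Definition vsum {n : nat} (x : vec n) : R := \big[Rplus/0]_(i < n) x i.

Definition vadd {n : nat} (x y : vec n) : vec n := fun i => x i + y i.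
Definition vsub {n : nat} (x y : vec n) : vec n := fun i => x i - y i.
Definition vscale {n : nat} (t : R) (x : vec n) : vec n := fun i => t * x i.

Definition vnorm {n : nat} (x : vec n) : R := sqrt (vsum (fun i => x i * x i)).

Definition in_S {n : nat} (x : vec n) : Prop :=
  vsum x = 1 /\ forall i, 0 <= x i.

Definition convex_on_S {n : nat} (f : vec n -> R) : Prop :=
  forall x y : vec n, in_S x -> in_S y -> forall t : R, 0 <= t <= 1 ->
    f (vadd (vscale t x) (vscale (1 - t) y)) <= t * f x + (1 - t) * f y.

Definition continuous_on_S {n : nat} (f : vec n -> R) : Prop :=
  forall x : vec n, in_S x -> forall eps : R, 0 < eps ->
    exists delta : R, 0 < delta /\
      forall y : vec n, in_S y -> vnorm (vsub y x) < delta ->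
        Rabs (f y - f x) < eps.

Definition open_set {n : nat} (U : vec n -> Prop) : Prop :=
  forall x, U x -> exists r : R, 0 < r /\ forall y, vnorm (vsub y x) < r -> U y.

Definition frechet_diff_at {n : nat} (g : vec n -> R) (x : vec n) : Prop :=
  exists a : vec n, forall eps : R, 0 < eps ->
    exists delta : R, 0 < delta /\
      forall h : vec n, vnorm h < delta ->
        Rabs (g (vadd x h) - g x - vsum (fun i => a i * h i)) <= eps * vnorm h.

Definition differentiable_on_S {n : nat} (f : vec n -> R) : Prop :=
  exists (U : vec n -> Prop) (g : vec n -> R),
    open_set U /\ (forall x, in_S x -> U x) /\
    (forall x, in_S x -> g x = f x) /\
    (forall x, U x -> frechet_diff_at g x).

Definition delta_k (s rho : R) (k : nat) : R := s / rho ^ k.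

Definition shift_pt {n : nat} (u : vec n) (i : 'I_n) (d : R) : vec n :=
  fun j => if j == i then u j + d else u j - d / (INR n - 1).

Definition u_plus {n : nat} (s rho : R) (u : vec n) (k : nat) (i : 'I_n) : vec n :=
  shift_pt u i (delta_k s rho k).
Definition u_minus {n : nat} (s rho : R) (u : vec n) (k : nat) (i : 'I_n) : vec n :=
  shift_pt u i (- delta_k s rho k).

From HB Require Import structures.
From mathcomp Require Import ssreflect ssrfun ssrbool eqtype ssrnat seq fintype bigop.
From Stdlib Require Import Reals Lra FunctionalExtensionality.
Open Scope R_scope.

(* The shifts u +- delta_k v_i go along the directions
   v_i = n/(n-1) e_i - 1/(n-1) (1,...,1), and delta_k -> 0, so u is a two-sided
   minimum of f along each v_i on a sequence of step sizes tending to 0.  Hence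
   the gradient a at u of a differentiable extension of f is orthogonal to every
   v_i, which forces all a_i to be equal.  Then a is orthogonal to x - u for every
   x in S, and a convex function with vanishing directional derivative from u
   towards x satisfies f u <= f x. *)

HB.instance Definition _ := Monoid.isComLaw.Build R 0 Rplus
  (fun a b c => esym (Rplus_assoc a b c)) Rplus_comm Rplus_0_l.

Definition vdot {n : nat} (a h : vec n) : R := vsum (fun i => a i * h i).

Definition has_grad {n : nat} (g : vec n -> R) (x a : vec n) : Prop :=
  forall eps : R, 0 < eps -> exists delta : R, 0 < delta /\
    forall h : vec n, vnorm h < delta ->
      Rabs (g (vadd x h) - g x - vdot a h) <= eps * vnorm h.

Definition unit_vec {n : nat} (i : 'I_n) : vec n :=
  fun j => if j == i then 1 else 0.

Definition shift_dir {n : nat} (i : 'I_n) : vec n :=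
  fun j => INR n / (INR n - 1) * unit_vec i j - 1 / (INR n - 1).

Lemma Rabs_le_inv x y : Rabs x <= y -> - y <= x <= y.
Proof. by rewrite /Rabs; case: Rcase_abs; lra. Qed.

Lemma Rmult_lt_of_lt_div x y z : 0 < z -> x < y / z -> x * z < y.
Proof.
move=> z0 /(Rmult_lt_compat_r z _ _ z0).
by rewrite /Rdiv Rmult_assoc Rinv_l ?Rmult_1_r //; lra.
Qed.

Lemma INR_pred_ge1 n : (1 < n)%nat -> 1 <= INR n - 1.
Proof. by move=> /leP /(le_INR 2) /=; lra. Qed.

Section Vectors.
Context {n : nat}.
Implicit Types (F G a w x y : vec n) (i j : 'I_n).

Lemma eq_vsum F G : (forall j, F j = G j) -> vsum F = vsum G.
Proof. by move=> FG; apply: eq_bigr => j _. Qed.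

Lemma vsumD F G : vsum (fun j => F j + G j) = vsum F + vsum G.
Proof. exact: big_split. Qed.

Lemma vsumB F G : vsum (fun j => F j - G j) = vsum F - vsum G.
Proof.
rewrite /vsum; apply: (big_ind3 (fun x y z : R => x = y - z)) => //; first lra.
by move=> ? ? ? ? ? ? -> ->; lra.
Qed.

Lemma vsumZ c F : vsum (fun j => c * F j) = c * vsum F.
Proof.
rewrite /vsum; apply: (big_ind2 (fun x y : R => x = c * y)) => //; first lra.
by move=> ? ? ? ? -> ->; lra.
Qed.

Lemma vsum_const c : vsum (fun _ : 'I_n => c) = INR n * c.
Proof.
rewrite /vsum big_const_ord; elim: n => [|k IH]; first by rewrite /=; lra.
by rewrite iterS S_INR IH; lra.
Qed.

Lemma vdot_unit_vec F i : vdot F (unit_vec i) = F i.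
Proof.
rewrite /vdot /vsum (bigD1 i) //= /unit_vec eqxx big1 /=; first lra.
by move=> j /negbTE ->; lra.
Qed.

Lemma vdotZ a t w : vdot a (vscale t w) = t * vdot a w.
Proof. by rewrite /vdot -vsumZ; apply: eq_vsum => j; rewrite /vscale; lra. Qed.

Lemma vnorm_ge0 w : 0 <= vnorm w.
Proof. exact: sqrt_pos. Qed.

Lemma vnormZ t w : vnorm (vscale t w) = Rabs t * vnorm w.
Proof.
rewrite /vnorm /vscale (eq_vsum _ (fun j => (t * t) * (w j * w j))); last first.
  by move=> j; lra.
by rewrite vsumZ sqrt_mult_alt ?sqrt_Rsqr_abs //; nra.
Qed.

Lemma in_S_segment x y t : in_S x -> in_S y -> 0 <= t <= 1 ->
  in_S (vadd (vscale t x) (vscale (1 - t) y)).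
Proof.
move=> [sx px] [sy py] t01; split.
  by rewrite /vadd /vscale vsumD !vsumZ sx sy; lra.
by move=> j; rewrite /vadd /vscale; have := px j; have := py j; nra.
Qed.

Lemma vdot_shift_dir a i :
  vdot a (shift_dir i) = INR n / (INR n - 1) * a i - 1 / (INR n - 1) * vsum a.
Proof.
rewrite /vdot (eq_vsum _ (fun j => INR n / (INR n - 1) * (a j * unit_vec i j)
   - 1 / (INR n - 1) * a j)); last by move=> j; rewrite /shift_dir; lra.
by rewrite vsumB !vsumZ -/(vdot a _) vdot_unit_vec.
Qed.

Lemma vsum_shift_dir i : (1 < n)%nat -> vsum (shift_dir i) = 0.
Proof.
move=> /INR_pred_ge1 n1.
rewrite (eq_vsum _ (fun j => (fun _ => 1) j * shift_dir i j)); last by move=> j; lra.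
by rewrite -/(vdot _ _) vdot_shift_dir vsum_const; field; lra.
Qed.

Lemma shift_ptE x i d : (1 < n)%nat ->
  shift_pt x i d = vadd x (vscale d (shift_dir i)).
Proof.
move=> /INR_pred_ge1 n1; apply: functional_extensionality => j.
by rewrite /shift_pt /vadd /vscale /shift_dir /unit_vec; case: (j == i); field; lra.
Qed.

Lemma in_S_shift_pt x i d : (1 < n)%nat -> in_S x ->
  (forall j, Rabs d <= x j) -> in_S (shift_pt x i d).
Proof.
move=> n1 [sx px] dx; rewrite shift_ptE //; split.
  by rewrite /vadd /vscale vsumD vsumZ vsum_shift_dir // sx; lra.
move=> j; rewrite -shift_ptE // /shift_pt.
have := dx j; have := Rle_abs d; have := Rle_abs (- d); rewrite Rabs_Ropp.
case: (j == i); first lra.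
have /INR_pred_ge1 n1' := n1.
have inv01 : 0 < / (INR n - 1) <= 1.
  by split; [apply: Rinv_0_lt_compat | rewrite -Rinv_1; apply: Rinv_le_contravar]; lra.
by rewrite /Rdiv; nra.
Qed.

(* a . v_i = (n a_i - sum a) / (n - 1), so orthogonality to every v_i makes a
   a constant vector. *)
Lemma vdot_eq0_of_shift_dir {a w} : (1 < n)%nat ->
  (forall i, vdot a (shift_dir i) = 0) -> vsum w = 0 -> vdot a w = 0.
Proof.
move=> n1 a_orth w0; have /INR_pred_ge1 n1' := n1.
have a_const j : a j = vsum a / INR n.
  have := a_orth j; rewrite vdot_shift_dir => h.
  have : (INR n - 1) * (INR n / (INR n - 1) * a j - 1 / (INR n - 1) * vsum a)
         = INR n * a j - vsum a by field; lra.
  rewrite h Rmult_0_r => nsum; have -> : vsum a = INR n * a j by lra.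
  by field; lra.
rewrite /vdot (eq_vsum _ (fun j => vsum a / INR n * w j)); last first.
  by move=> j; rewrite a_const.
by rewrite vsumZ w0; lra.
Qed.

Lemma exists_pos_lb {x} :
  (forall j, 0 < x j) -> exists mu, 0 < mu /\ forall j, mu <= x j.
Proof.
move=> xpos; exists (\big[Rmin/1]_(j < n) x j); split.
  by apply: (big_ind (fun m => 0 < m)) => //; [lra | move=> *; apply: Rmin_glb_lt].
move=> j; have := mem_index_enum j.
elim: (index_enum _) => [|k r IH] //.
rewrite in_cons big_cons => /orP [/eqP -> | /IH]; first exact: Rmin_l.
exact: Rle_trans (Rmin_r _ _).
Qed.

End Vectors.

Lemma le0_of_le_eps x N : 0 <= N -> (forall eps, 0 < eps -> x <= eps * N) -> x <= 0.
Proof.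
move=> N0 xN; apply: Rnot_lt_le => x0.
set q := x / (2 * (N + 1)).
have q0 : 0 < q by apply: Rdiv_lt_0_compat; lra.
have xq : x = 2 * (q * N) + 2 * q by rewrite /q; field; lra.
by have := xN q q0; have := Rmult_le_pos q N (Rlt_le _ _ q0) N0; lra.
Qed.

Lemma has_grad_ray {n : nat} {g : vec n -> R} {u a : vec n} : has_grad g u a ->
  forall w eps, 0 < eps -> exists T, 0 < T /\ forall t, Rabs t < T ->
    Rabs (g (vadd u (vscale t w)) - g u - t * vdot a w) <= eps * (Rabs t * vnorm w).
Proof.
move=> ga w eps eps0; have [d [d0 gd]] := ga eps eps0.
have N0 := vnorm_ge0 w.
exists (d / (vnorm w + 1)); split; first by apply: Rdiv_lt_0_compat; lra.
move=> t tT; rewrite -vdotZ -vnormZ; apply: gd; rewrite vnormZ.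
have := Rabs_pos t; have : Rabs t * (vnorm w + 1) < d.
  by apply: Rmult_lt_of_lt_div => //; lra.
nra.
Qed.

Lemma grad_dot_eq0_of_two_sided_min {n : nat} {g : vec n -> R} {u a v : vec n} :
  has_grad g u a ->
  (forall eta, 0 < eta -> exists t, 0 < t < eta /\
     g u <= g (vadd u (vscale t v)) /\ g u <= g (vadd u (vscale (- t) v))) ->
  vdot a v = 0.
Proof.
move=> ga umin; suff /Rabs_le_inv : Rabs (vdot a v) <= 0 by lra.
apply: (le0_of_le_eps _ _ (vnorm_ge0 v)) => eps eps0.
have [T [T0 gT]] := has_grad_ray ga v eps eps0.
have [t [[t0 tT] [up um]]] := umin T T0.
have := gT t; have := gT (- t); rewrite Rabs_Ropp Rabs_right; try lra.
move=> /(_ tT) /Rabs_le_inv hm /(_ tT) /Rabs_le_inv hp.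
suff : t * Rabs (vdot a v) <= t * (eps * vnorm v) by nra.
by rewrite /Rabs; case: Rcase_abs; nra.
Qed.

Lemma convex_min_of_grad {n : nat} {f g : vec n -> R} {u a x : vec n} :
  convex_on_S f -> (forall y, in_S y -> g y = f y) -> has_grad g u a ->
  in_S u -> in_S x -> 0 <= vdot a (vsub x u) -> f u <= f x.
Proof.
move=> fconv gf ga uS xS dir_ge0.
suff : f u - f x <= 0 by lra.
apply: (le0_of_le_eps _ _ (vnorm_ge0 (vsub x u))) => eps eps0.
have [T [T0 gT]] := has_grad_ray ga (vsub x u) eps eps0.
set t := Rmin 1 T / 2.
have t_bounds : 0 < t <= 1 /\ t < T.
  by have := Rmin_l 1 T; have := Rmin_r 1 T; have := Rmin_glb_lt 1 T 0; rewrite /t; lra.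
have segE : vadd (vscale t x) (vscale (1 - t) u) = vadd u (vscale t (vsub x u)).
  by apply: functional_extensionality => j; rewrite /vadd /vscale /vsub; lra.
have segS : in_S (vadd (vscale t x) (vscale (1 - t) u)) by apply: in_S_segment => //; lra.
have fseg := fconv x u xS uS t ltac:(lra).
rewrite -gf // segE in fseg.
have := gT t; rewrite Rabs_right ?(gf u uS); last lra.
move=> /(_ ltac:(lra)) /Rabs_le_inv; have := vnorm_ge0 (vsub x u); nra.
Qed.

Lemma delta_k_small {s rho : R} : 0 < s -> 1 < rho ->
  forall eta, 0 < eta -> exists k, (1 <= k)%nat /\ 0 < delta_k s rho k < eta.
Proof.
move=> s0 rho1 eta eta0.
have rho_inv : Rabs (/ rho) < 1.
  rewrite Rabs_right; last by left; apply: Rinv_0_lt_compat; lra.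
  by rewrite -Rinv_1; apply: Rinv_lt_contravar; lra.
have [N small] := pow_lt_1_zero _ rho_inv (eta / s) (Rdiv_lt_0_compat _ _ eta0 s0).
exists N.+1; split=> //.
have pos : 0 < (/ rho) ^ N.+1 by apply: pow_lt; apply: Rinv_0_lt_compat; lra.
have := small N.+1 (Nat.le_succ_diag_r N); rewrite Rabs_right; last lra.
rewrite /delta_k -[s / _]/(s * / rho ^ N.+1) -pow_inv => lt.
by split; [nra | rewrite Rmult_comm; apply: Rmult_lt_of_lt_div].
Qed.

Lemma shift_dir_two_sided_min {n : nat} {f g : vec n -> R} {s rho : R} {u : vec n}
    {i : 'I_n} :
  (1 < n)%nat -> 0 < s -> 1 < rho -> in_S u -> (forall j, 0 < u j) ->
  (forall y, in_S y -> g y = f y) ->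
  (forall k, (1 <= k)%nat -> forall i : 'I_n,
     (in_S (u_plus s rho u k i) -> f u <= f (u_plus s rho u k i)) /\
     (in_S (u_minus s rho u k i) -> f u <= f (u_minus s rho u k i))) ->
  forall eta, 0 < eta -> exists t, 0 < t < eta /\
    g u <= g (vadd u (vscale t (shift_dir i))) /\
    g u <= g (vadd u (vscale (- t) (shift_dir i))).
Proof.
move=> n1 s0 rho1 uS upos gf uloc eta eta0.
have [mu [mu0 mu_le]] := exists_pos_lb upos.
have [k [k1 dk]] := delta_k_small s0 rho1 _ (Rmin_glb_lt _ _ _ eta0 mu0).
have := Rmin_l eta mu; have := Rmin_r eta mu => min_mu min_eta.
exists (delta_k s rho k); split; first lra.
have [fp fm] := uloc k k1 i.
have small d : Rabs d = delta_k s rho k -> forall j, Rabs d <= u j.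
  by move=> -> j; have := mu_le j; lra.
have pS : in_S (u_plus s rho u k i).
  by apply: in_S_shift_pt => //; apply: small; rewrite Rabs_right; lra.
have mS : in_S (u_minus s rho u k i).
  by apply: in_S_shift_pt => //; apply: small; rewrite Rabs_Ropp Rabs_right; lra.
rewrite /u_plus /u_minus !shift_ptE // in pS mS fp fm.
by rewrite !gf //; split; [exact: fp | exact: fm].
Qed.

Theorem theorem1 (n : nat) (Hn : (2 <= n)%nat) (f : vec n -> R)
  (Hconv : convex_on_S f) (Hcont : continuous_on_S f)
  (Hdiff : differentiable_on_S f)
  (s rho : R) (Hs : 0 < s) (Hrho : 1 < rho)
  (u : vec n) (Hu : in_S u) (Hupos : forall j, 0 < u j)
  (Hloc : forall (k : nat), (1 <= k)%nat -> forall i : 'I_n,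
     (in_S (u_plus s rho u k i) -> f u <= f (u_plus s rho u k i)) /\
     (in_S (u_minus s rho u k i) -> f u <= f (u_minus s rho u k i))) :
  forall x : vec n, in_S x -> f u <= f x.
Proof.
move=> x Hx.
have [U [g [_ [HUS [Hgf Hgd]]]]] := Hdiff.
have [a Ha] : exists a, has_grad g u a := Hgd u (HUS u Hu).
have a_orth i : vdot a (shift_dir i) = 0.
  apply: (grad_dot_eq0_of_two_sided_min Ha).
  exact: (shift_dir_two_sided_min Hn Hs Hrho Hu Hupos Hgf Hloc).
apply: (convex_min_of_grad Hconv Hgf Ha Hu Hx).
rewrite (vdot_eq0_of_shift_dir Hn a_orth); first lra.
by case: Hx => sx _; case: Hu => su _; rewrite /vsub vsumB sx su; lra.
Qed.
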